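(* Let $(G,\ell,\mathcal{C})$ be a triplet, let $k,q_1,q_2$ be nonnegative integers, and let $q'=2^{k\cdot q_2}\cdot q_1+1$. Suppose $C_1,C_2,\ldots,C_{q'}\subseteq V(G)$ are pairwise disjoint vertex sets, each of size at most $k$, which pairwise have the same type in $(G,\ell,\mathcal{C})$. Let $\phi$ be an MSO formula in prenex form with $q_1$ vertex (FO) quantifiers and $q_2$ set (MSO) quantifiers. Then $G,\ell,\mathcal{C}\models\phi$ if and only if $G\setminus C_1,\ell,\mathcal{C}_1\models\phi$, where $\mathcal{C}_1$ is the restriction of $\mathcal{C}$ to $V(G)\setminus C_1$.
   Context: Graphs are finite and simple. There are vertex constants $u_1,u_2,\ldots$ and set constants $D_1,D_2,\ldots$, vertex variables $x_1,x_2,\ldots$ and set variables $X_1,X_2,\ldots$. A triplet $(G,\ell,\mathcal{C})$ consists of a graph $G$, a partial function $\ell$ (labeling) from vertex constants to $V(G)$, and a partial function $\mathcal{C}$ (coloring) from set constants to subsets of $V(G)$. MSO formulas are generated by $\phi\to\exists X.\phi\mid\exists x.\phi\mid\phi\lor\phi\mid\neg\phi\mid y\sim y\mid y=y\mid y\in Y$, where $y$ is a vertex variable or vertex constant and $Y$ a set variable or set constant. Semantics: $G,\ell,\mathcal{C}\models u_i\in D_j$ iff $\ell(u_i)$ is defined and $\ell(u_i)\in\mathcal{C}(D_j)$ (with $\mathcal{C}(D_j)$ defined); $u_i=u_j$ iff both are defined and $\ell(u_i)=\ell(u_j)$; $u_i\sim u_j$ iff both defined and $\ell(u_i)\ell(u_j)\in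 E(G)$; $\lor,\neg$ as usual; $G,\ell,\mathcal{C}\models\exists x_i.\phi$ iff there is $v\in V(G)$ such that $G,\ell',\mathcal{C}\models\phi[x_i\setminus u_i]$, where $\ell(u_i)$ is undefined, $\phi[x_i\setminus u_i]$ replaces every occurrence of $x_i$ by $u_i$, and $\ell'$ agrees with $\ell$ except $\ell'(u_i)=v$; similarly $G,\ell,\mathcal{C}\models\exists X_i.\phi$ iff there is $S\subseteq V(G)$ such that $G,\ell,\mathcal{C}'\models\phi[X_i\setminus D_i]$ where $\mathcal{C}(D_i)$ is undefined and $\mathcal{C}'$ agrees with $\mathcal{C}$ except $\mathcal{C}'(D_i)=S$. Otherwise the formula is not satisfied. Prenex form: all quantifiers at the beginning. An isomorphism between triplets $(G_1,\ell_1,\mathcal{C}_1)$ and $(G_2,\ell_2,\mathcal{C}_2)$ is a bijection $f:V(G_1)\to V(G_2)$ preserving adjacency and non-adjacency such that for every $u_i$ either both $\ell_1(u_i),\ell_2(u_i)$ are undefined or $f(\ell_1(u_i))=\ell_2(u_i)$, and for every $D_i$ either both $\mathcal{C}_1(D_i),\mathcal{C}_2(D_i)$ are undefined or $f(\mathcal{C}_1(D_i))=\mathcal{C}_2(D_i)$. Two sets $C_1,C_2\subseteq V(G)$ have the same type in $(G,\ell,\mathcal{C})$ if there is an isomorphism $f$ from $(G,\ell,\mathcal{C})$ to itself mapping elements of $C_1$ to $C_2$, elements of $C_2$ to $C_1$, and every vertex of $V(G)\setminus(C_1\cup C_2)$ to itself. The restriction of $\mathcal{C}$ to $V(G)\setminus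 C_1$ is the coloring $\mathcal{C}_1$ with $\mathcal{C}_1(D_i)=\mathcal{C}(D_i)\setminus C_1$ whenever $\mathcal{C}(D_i)$ is defined, and undefined otherwise. *)

From mathcomp Require Import all_boot.
Set Implicit Arguments. Unset Strict Implicit. Unset Printing Implicit Defensive.

(* A triplet (G, l, C) over an ambient finite type T of potential vertices:
   V(G) = tV, adjacency tE (only its restriction to tV matters),
   labeling tl : vertex constants u_i -> option vertex,
   coloring tc : set constants D_i -> option vertex set. *)
Record triplet (T : finType) := Triplet {
  tV : {set T};
  tE : rel T;
  tl : nat -> option T;
  tc : nat -> option {set T} }.

Definition wf_triplet (T : finType) (t : triplet T) : Prop :=
  (forall x y, tE t x y = tE t y x) /\ (forall x, ~~ tE t x x) /\
  (forall i v, tl t i = Some v -> v \in tV t) /\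
  (forall i S, tc t i = Some S -> S \subset tV t).

Inductive vterm := VVar of nat | VCon of nat.
Inductive sterm := SVar of nat | SCon of nat.
Inductive mso :=
| ExV of nat & mso
| ExS of nat & mso
| Or of mso & mso
| Not of mso
| Adj of vterm & vterm
| Eqv of vterm & vterm
| Mem of vterm & sterm.

Definition substVt (i : nat) (y : vterm) : vterm :=
  match y with VVar j => if j == i then VCon i else y | _ => y end.
Definition substSt (i : nat) (Y : sterm) : sterm :=
  match Y with SVar j => if j == i then SCon i else Y | _ => Y end.

Fixpoint substV (i : nat) (p : mso) : mso :=
  match p with
  | ExV j q => ExV j (substV i q)
  | ExS j q => ExS j (substV i q)
  | Or q r => Or (substV i q) (substV i r)
  | Not q => Not (substV i q)
  | Adj a b => Adj (substVt i a) (substVt i b)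
  | Eqv a b => Eqv (substVt i a) (substVt i b)
  | Mem a Y => Mem (substVt i a) Y
  end.

Fixpoint substS (i : nat) (p : mso) : mso :=
  match p with
  | ExV j q => ExV j (substS i q)
  | ExS j q => ExS j (substS i q)
  | Or q r => Or (substS i q) (substS i r)
  | Not q => Not (substS i q)
  | Mem a Y => Mem a (substSt i Y)
  | _ => p
  end.

Fixpoint msize (p : mso) : nat :=
  match p with
  | ExV _ q | ExS _ q | Not q => (msize q).+1
  | Or q r => (msize q + msize r).+1
  | _ => 1
  end.

Definition set_label (T : finType) (t : triplet T) (i : nat) (v : T) : triplet T :=
  Triplet (tV t) (tE t) (fun j => if j == i then Some v else tl t j) (tc t).
Definition set_color (T : finType) (t : triplet T) (i : nat) (S : {set T}) : triplet T :=
  Triplet (tV t) (tE t) (tl t) (fun j => if j == i then Some S else tc t j).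

(* Satisfaction, defined by recursion on a fuel bounding the formula size
   (substitution preserves size, so fuel msize p suffices). *)
Fixpoint satn (T : finType) (n : nat) (t : triplet T) (p : mso) : Prop :=
  match n with
  | 0 => False
  | n'.+1 =>
    match p with
    | ExV i q => tl t i = None /\
        exists2 v, v \in tV t & satn n' (set_label t i v) (substV i q)
    | ExS i q => tc t i = None /\
        exists2 A : {set T}, A \subset tV t & satn n' (set_color t i A) (substS i q)
    | Or q r => satn n' t q \/ satn n' t r
    | Not q => ~ satn n' t q
    | Adj (VCon i) (VCon j) =>
        match tl t i, tl t j with
        | Some x, Some y => tE t x y = true
        | _, _ => False
        end
    | Eqv (VCon i) (VCon j) =>
        match tl t i, tl t j with
        | Some x, Some y => x = y
        | _, _ => False
        end
    | Mem (VCon i) (SCon j) =>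
        match tl t i, tc t j with
        | Some x, Some A => x \in A
        | _, _ => False
        end
    | _ => False   (* atom with a free variable: not satisfied *)
    end
  end.

Definition sat (T : finType) (t : triplet T) (p : mso) : Prop :=
  satn (msize p) t p.

Fixpoint qfree (p : mso) : bool :=
  match p with
  | ExV _ _ | ExS _ _ => false
  | Or q r => qfree q && qfree r
  | Not q => qfree q
  | _ => true
  end.

(* prenex: all quantifiers at the beginning (negations may be interleaved
   in the prefix, since there is no primitive universal quantifier) *)
Fixpoint prenex (p : mso) : bool :=
  match p with
  | ExV _ q | ExS _ q | Not q => prenex q
  | _ => qfree p
  end.

Fixpoint countV (p : mso) : nat :=
  match p with
  | ExV _ q => (countV q).+1
  | ExS _ q | Not q => countV q
  | Or q r => countV q + countV r
  | _ => 0
  end.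

Fixpoint countS (p : mso) : nat :=
  match p with
  | ExS _ q => (countS q).+1
  | ExV _ q | Not q => countS q
  | Or q r => countS q + countS r
  | _ => 0
  end.

Definition triplet_iso (T : finType) (t1 t2 : triplet T) (f : T -> T) : Prop :=
  [/\ f @: tV t1 = tV t2,
      {in tV t1 &, injective f},
      {in tV t1 &, forall x y, tE t2 (f x) (f y) = tE t1 x y},
      (forall i, omap f (tl t1 i) = tl t2 i) &
      (forall i, omap (fun S : {set T} => f @: S) (tc t1 i) = tc t2 i)].

Definition same_type (T : finType) (t : triplet T) (C1 C2 : {set T}) : Prop :=
  exists f, [/\ triplet_iso t t f,
    {in C1, forall x, f x \in C2},
    {in C2, forall x, f x \in C1} &
    {in tV t :\: (C1 :|: C2), forall x, f x = x}].

Definition delete (T : finType) (t : triplet T) (C : {set T}) : triplet T :=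
  Triplet (tV t :\: C) (tE t) (tl t) (fun i => omap (fun S : {set T} => S :\: C) (tc t i)).

(* Prove, by induction on the prenex formula, that deleting one member of a
   family of more than 2^(k q2) q1 pairwise disjoint sets of size at most k,
   any two of which are exchanged by an automorphism fixing everything else,
   does not change the truth value.  Which member is deleted does not matter:
   an exchanging automorphism maps one deletion onto the other.  A vertex
   witness lies in at most one member, and the others still form a family once
   the witness is labelled.  For a set witness A, fix a base member C_r and
   involutions g_j exchanging C_r with C_j: the trace g_j(A :&: C_j) is one of
   at most 2^k subsets of C_r, members with equal traces are exchanged by
   g_i g_j g_i, which preserves A, and by pigeonhole some trace class is a
   family of more than 2^(k (q2 - 1)) q1 members for the coloured triplet.
   The involutions exist because a third member R lets an automorphism act as
   f on P and as f^-1 on Q whenever f exchanges P and Q. *)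

From mathcomp Require Import all_boot fingroup perm zify.
From Stdlib Require Import FunctionalExtensionality.

Set Implicit Arguments. Unset Strict Implicit. Unset Printing Implicit Defensive.

Lemma qfree_substV i p : qfree (substV i p) = qfree p.
Proof. by elim: p => //= *; congruence. Qed.

Lemma qfree_substS i p : qfree (substS i p) = qfree p.
Proof. by elim: p => //= *; congruence. Qed.

Lemma prenex_substV i p : prenex (substV i p) = prenex p.
Proof. by elim: p => //= *; rewrite ?qfree_substV. Qed.

Lemma prenex_substS i p : prenex (substS i p) = prenex p.
Proof. by elim: p => //= *; rewrite ?qfree_substS. Qed.

Lemma msize_substV i p : msize (substV i p) = msize p.
Proof. by elim: p => //= *; congruence. Qed.

Lemma msize_substS i p : msize (substS i p) = msize p.
Proof. by elim: p => //= *; congruence. Qed.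

Lemma countV_substV i p : countV (substV i p) = countV p.
Proof. by elim: p => //= *; congruence. Qed.

Lemma countV_substS i p : countV (substS i p) = countV p.
Proof. by elim: p => //= *; congruence. Qed.

Lemma countS_substV i p : countS (substV i p) = countS p.
Proof. by elim: p => //= *; congruence. Qed.

Lemma countS_substS i p : countS (substS i p) = countS p.
Proof. by elim: p => //= *; congruence. Qed.

Lemma qfree_countV p : qfree p -> countV p = 0.
Proof. by elim: p => //= q IHq r IHr /andP[/IHq -> /IHr ->]. Qed.

Lemma imset_preimset_in (aT rT : finType) (f : aT -> rT) (D : {set aT}) (A : {set rT}) :
  A \subset f @: D -> f @: (D :&: f @^-1: A) = A.
Proof.
move=> AfD; apply/setP=> y; apply/imsetP/idP => [[x] | yA].
  by rewrite !inE => /andP[_ ?] ->.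
have /imsetP[x xD yx] := subsetP AfD y yA.
by exists x; rewrite // !inE xD -yx.
Qed.

Lemma pigeonhole_fiber (aT rT : finType) (f : aT -> rT) (J : {set aT}) (D : {set rT}) m :
  {in J, forall j, f j \in D} -> #|D| * m < #|J| ->
  exists2 u, u \in D & m < #|[set j in J | f j == u]|.
Proof.
move=> fJ ltJ; have /exists_inP[u uD] : [exists u in D, m < #|[set j in J | f j == u]|].
  apply: contraLR ltJ; rewrite negb_exists_in -leqNgt => /forall_inP small.
  rewrite -sum1_card (partition_big f (mem D)) //= -sum_nat_const leq_sum // => u uD.
  rewrite (eq_bigl [in [set j in J | f j == u]]) => [|j]; last by rewrite inE.
  by rewrite sum1_card leqNgt small.
by exists u.
Qed.

Section Satisfaction.
Variable T : finType.
Implicit Types (t : triplet T) (A B D P Q R : {set T}).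

Lemma sat_ExV t x q : sat t (ExV x q) <->
  tl t x = None /\ exists2 v, v \in tV t & sat (set_label t x v) (substV x q).
Proof. by rewrite /sat /= msize_substV. Qed.

Lemma sat_ExS t X q : sat t (ExS X q) <->
  tc t X = None /\ exists2 A : {set T}, A \subset tV t & sat (set_color t X A) (substS X q).
Proof. by rewrite /sat /= msize_substS. Qed.

Definition wf_assign t :=
  (forall i v, tl t i = Some v -> v \in tV t) /\
  (forall i S, tc t i = Some S -> S \subset tV t).

Definition label_free t D := forall i v, tl t i = Some v -> v \notin D.

Lemma wf_assign_label t x v :
  wf_assign t -> v \in tV t -> wf_assign (set_label t x v).
Proof. by case=> Hl Hc vV; split=> //= i w; case: eqP => [_ [<-] | _ /Hl]. Qed.

Lemma wf_assign_color t X A :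
  wf_assign t -> A \subset tV t -> wf_assign (set_color t X A).
Proof. by case=> Hl Hc AV; split=> //= i S; case: eqP => [_ [<-] | _ /Hc]. Qed.

Lemma wf_assign_delete t D :
  wf_assign t -> label_free t D -> wf_assign (delete t D).
Proof.
case=> Hl Hc HD; split=> /= [i v lv | i S]; first by rewrite inE (HD _ _ lv) (Hl _ _ lv).
by case E: (tc t i) => [S'|] //= [<-]; rewrite setSD ?(Hc _ _ E).
Qed.

Lemma delete_color t X A D :
  delete (set_color t X A) D = set_color (delete t D) X (A :\: D).
Proof. by congr Triplet; apply: functional_extensionality => i /=; case: eqP. Qed.

Lemma delete_set0 t : delete t set0 = t.
Proof.
case: t => V E l c; rewrite /delete /= setD0; congr Triplet.
by apply: functional_extensionality => i; case: (c i) => //= S; rewrite setD0.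
Qed.

Lemma triplet_iso_label t1 t2 f x v : triplet_iso t1 t2 f ->
  triplet_iso (set_label t1 x v) (set_label t2 x (f v)) f.
Proof. by case=> *; split=> //= i; case: eqP. Qed.

Lemma triplet_iso_color t1 t2 f X A : triplet_iso t1 t2 f ->
  triplet_iso (set_color t1 X A) (set_color t2 X (f @: A)) f.
Proof. by case=> *; split=> //= i; case: eqP. Qed.

Lemma satn_iso n t1 t2 f p : wf_assign t1 -> triplet_iso t1 t2 f ->
  satn n t1 p <-> satn n t2 p.
Proof.
elim: n t1 t2 p => // n IH t1 t2 p wf1 iso.
have [fV finj fE fl fc] := iso; have [wl wc] := wf1.
case: p => [x q|X q|q r|q|a b|a b|a Y] /=.
- rewrite -fl; case: (tl t1 x) => [v|] /=; first by split=> -[].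
  split=> -[_ [v vV Hv]]; split=> //.
    exists (f v); first by rewrite -fV imset_f.
    exact/(IH _ _ _ (wf_assign_label x wf1 vV) (triplet_iso_label x v iso)).
  move: vV Hv; rewrite -fV => /imsetP[w wV ->] Hw; exists w => //.
  exact/(IH _ _ _ (wf_assign_label x wf1 wV) (triplet_iso_label x w iso)).
- rewrite -fc; case: (tc t1 X) => [S|] /=; first by split=> -[].
  split=> -[_ [A AV HA]]; split=> //.
    exists (f @: A); first by rewrite -fV imsetS.
    exact/(IH _ _ _ (wf_assign_color X wf1 AV) (triplet_iso_color X A iso)).
  pose B := tV t1 :&: f @^-1: A; have BV : B \subset tV t1 by rewrite subsetIl.
  exists B => //; move: HA; rewrite -(@imset_preimset_in _ _ f (tV t1) A) ?fV //.
  by move/(IH _ _ _ (wf_assign_color X wf1 BV) (triplet_iso_color X B iso)).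
- by rewrite (IH _ _ q wf1 iso) (IH _ _ r wf1 iso).
- by rewrite (IH _ _ q wf1 iso).
- case: a b => [i|i] [j|j] //=; rewrite -!fl.
  case li: (tl t1 i) => [x|] //=; case lj: (tl t1 j) => [y|] //=.
  by rewrite fE ?(wl _ _ li) ?(wl _ _ lj).
- case: a b => [i|i] [j|j] //=; rewrite -!fl.
  case li: (tl t1 i) => [x|] //=; case lj: (tl t1 j) => [y|] //=.
  by split=> [-> // | /finj]; apply; [apply: wl li | apply: wl lj].
- case: a Y => [i|i] [j|j] //=; rewrite -fl -fc.
  case li: (tl t1 i) => [x|] //=; case cj: (tc t1 j) => [S|] //=.
  have SV := subsetP (wc _ _ cj); split=> [xS | /imsetP[y yS]]; first exact: imset_f.
  by move/finj => -> //; [apply: wl li | apply: SV].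
Qed.

Lemma satn_delete_vfree n t D p : countV p = 0 -> label_free t D ->
  satn n t p <-> satn n (delete t D) p.
Proof.
elim: n t p => // n IH t p + tD.
case: p => [x q|X q|q r|q|a b|a b|a Y] //= cV.
- case: (tc t X) => [S|] /=; first by split=> -[].
  have IHq A : satn n (set_color t X A) (substS X q) <->
               satn n (set_color (delete t D) X (A :\: D)) (substS X q).
    by rewrite -delete_color; apply: IH; rewrite ?countV_substS.
  split=> -[_ [A AV HA]]; split=> //.
    by exists (A :\: D); [exact: setSD | apply/IHq].
  move: AV; rewrite subsetD => /andP[AV /setDidPl AD].
  by exists A => //; apply/IHq; rewrite AD.
- move/eqP: cV; rewrite addn_eq0 => /andP[/eqP cq /eqP cr].
  by rewrite (IH _ _ cq tD) (IH _ _ cr tD).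
- by rewrite (IH _ _ cV tD).
- case: a Y => [i|i] [j|j] //=; case li: (tl t i) => [x|] //=.
  by case: (tc t j) => [S|] //=; rewrite inE (tD _ _ li).
Qed.

Lemma sat_delete_vfree t D p : countV p = 0 -> label_free t D ->
  sat t p <-> sat (delete t D) p.
Proof. exact: satn_delete_vfree. Qed.

End Satisfaction.

Section Automorphisms.
Variable T : finType.
Implicit Types (t : triplet T) (f g h s : {perm T}) (A B P Q R : {set T}).
Local Open Scope group_scope.

Definition aut t s := triplet_iso t t s.

Lemma perm_imset_eq s A : {in A, forall x, s x \in A} -> s @: A = A.
Proof.
move=> sA; apply/eqP; rewrite eqEcard card_imset ?leqnn ?andbT; last exact: perm_inj.
by apply/subsetP=> _ /imsetP[x xA ->]; apply: sA.
Qed.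

Lemma perm_imsetD s A B : s @: (A :\: B) = s @: A :\: s @: B.
Proof. by rewrite -[s]invgK !im_permV preimsetD. Qed.

Lemma aut1 t : aut t 1.
Proof.
split=> [|x y _ _ /perm_inj //|x y _ _|i|i]; rewrite ?imset_perm1 ?perm1 //.
  by case: (tl t i) => //= v; rewrite perm1.
by case: (tc t i) => //= S; rewrite imset_perm1.
Qed.

Lemma autM t s h : aut t s -> aut t h -> aut t (s * h).
Proof.
case=> sV _ sE sl sc [hV _ hE hl hc].
have sM A : (s * h) @: A = h @: (s @: A).
  by rewrite -imset_comp; apply: eq_imset => x; rewrite permM.
have sV' x : x \in tV t -> s x \in tV t by move=> xV; rewrite -sV imset_f.
split=> [|x y _ _ /perm_inj //|x y xV yV|i|i].
- by rewrite sM sV hV.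
- by rewrite !permM hE ?sV' ?sE.
- by case: (tl t i) (sl i) (hl i) => //= v [sv] [hv]; rewrite permM sv hv.
- by case: (tc t i) (sc i) (hc i) => //= S [sS] [hS]; rewrite sM sS hS.
Qed.

Lemma autV t s : aut t s -> aut t s^-1.
Proof.
case=> sV _ sE sl sc.
have sV' x : x \in tV t -> s^-1 x \in tV t.
  by rewrite -{1}sV => /imsetP[y yV ->]; rewrite permK.
split=> [|x y _ _ /perm_inj //|x y xV yV|i|i].
- exact: perm_imset_eq.
- by rewrite -sE ?sV' ?permKV.
- by case: (tl t i) (sl i) => //= v [{1}<-]; rewrite permK.
- case: (tc t i) (sc i) => //= S [{1}<-].
  by rewrite -imset_comp (eq_imset _ (permK s)) imset_id.
Qed.

Lemma aut_label t s x v : aut t s -> s v = v -> aut (set_label t x v) s.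
Proof. by move=> ats sv; have := triplet_iso_label x v ats; rewrite sv. Qed.

Lemma aut_color t s X A : aut t s -> s @: A = A -> aut (set_color t X A) s.
Proof. by move=> ats sA; have := triplet_iso_color X A ats; rewrite sA. Qed.

Lemma aut_pairwise t h : wf_assign t ->
  {in tV t &, forall x y, exists2 s, aut t s & s x = h x /\ s y = h y} -> aut t h.
Proof.
case=> wl wc hP.
have hV x : x \in tV t -> h x \in tV t.
  by move=> xV; have [s [sV _ _ _ _] [<- _]] := hP x x xV xV; rewrite -sV imset_f.
split=> [|x y _ _ /perm_inj //|x y xV yV|i|i].
- exact: perm_imset_eq.
- by have [s [_ _ sE _ _] [<- <-]] := hP x y xV yV; apply: sE.
- case li: (tl t i) => [v|] //=; have vV := wl _ _ li.
  by have [s [_ _ _ sl _] [<- _]] := hP v v vV vV; move: (sl i); rewrite li.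
- case ci: (tc t i) => [S|] //=; congr Some; apply: perm_imset_eq => x xS.
  have xV := subsetP (wc _ _ ci) x xS.
  have [s [_ _ _ _ sc] [<- _]] := hP x x xV xV.
  by move: (sc i); rewrite ci => -[<-]; apply: imset_f.
Qed.

Lemma triplet_iso_eq_in t1 t2 (f g : T -> T) : wf_assign t1 -> {in tV t1, f =1 g} ->
  triplet_iso t1 t2 f -> triplet_iso t1 t2 g.
Proof.
case=> wl wc fg [fV finj fE fl fc]; split.
- by rewrite -(eq_in_imset fg).
- by move=> x y xV yV; rewrite -!fg //; apply: finj.
- by move=> x y xV yV; rewrite -!fg ?fE.
- by move=> i; rewrite -fl; case li: (tl t1 i) => [v|] //=; rewrite fg ?(wl _ _ li).
- move=> i; rewrite -fc; case ci: (tc t1 i) => [S|] //=; congr Some.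
  by apply: eq_in_imset => x /(subsetP (wc _ _ ci)) /fg ->.
Qed.

(* Unlike [same_type], a swap is a permutation of the whole ambient type that
   fixes everything outside P :|: Q, so that swaps compose and invert. *)
Definition swaps t s P Q :=
  [/\ aut t s, {in P, forall x, s x \in Q}, {in Q, forall x, s x \in P} &
      forall x, x \notin P -> x \notin Q -> s x = x].

Definition swappable t P Q := exists s, swaps t s P Q.

Lemma swaps_sym t s P Q : swaps t s P Q -> swaps t s Q P.
Proof. by case=> ats sP sQ sout; split=> // x xQ xP; apply: sout. Qed.

Lemma swappable_sym t P Q : swappable t P Q -> swappable t Q P.
Proof. by case=> s /swaps_sym; exists s. Qed.

Lemma swaps_imset t s P Q : swaps t s P Q -> s @: P = Q.
Proof.
case=> _ sP sQ _; have sPQ : s @: P \subset Q by apply/subsetP=> _ /imsetP[x /sP ? ->].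
have sQP : s @: Q \subset P by apply/subsetP=> _ /imsetP[x /sQ ? ->].
apply/eqP; rewrite eqEcard sPQ card_imset; last exact: perm_inj.
by rewrite -(card_imset Q (@perm_inj _ s)) subset_leq_card.
Qed.

Lemma swaps_inv t s P Q : swaps t s P Q -> swaps t s^-1 P Q.
Proof.
move=> sw; have [ats _ _ sout] := sw.
have s'in A B : s @: A = B -> {in B, forall x, s^-1 x \in A}.
  by move=> <- _ /imsetP[x xA ->]; rewrite permK.
split; [exact: autV | exact: s'in (swaps_imset (swaps_sym sw)) |
        exact: s'in (swaps_imset sw) | ].
by move=> x xP xQ; rewrite -{1}(sout x xP xQ) permK.
Qed.

Lemma swaps_label t s P Q x v : swaps t s P Q -> v \notin P -> v \notin Q ->
  swaps (set_label t x v) s P Q.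
Proof. by case=> ats sP sQ sout vP vQ; split=> //; apply: aut_label (sout _ vP vQ). Qed.

Lemma swaps_color t s P Q X A : swaps t s P Q -> s @: A = A ->
  swaps (set_color t X A) s P Q.
Proof. by case=> ats sP sQ sout sA; split=> //; apply: aut_color. Qed.

Lemma swaps_label_free t s P Q : swaps t s P Q -> label_free t Q -> label_free t P.
Proof.
case=> [[_ _ _ sl _] sP _ _] tQ i v li; apply: contra (tQ i v li) => vP.
by move: (sl i) (sP v vP); rewrite li => -[->].
Qed.

Lemma same_type_swappable t P Q : wf_assign t -> P \subset tV t -> Q \subset tV t ->
  same_type t P Q -> swappable t P Q.
Proof.
move=> wf PV QV [f [fiso fP fQ fout]]; have [fV finj _ _ _] := fiso.
pose g x := if x \in tV t then f x else x.
have gf x : x \in tV t -> g x = f x by rewrite /g => ->.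
have fVx x : x \in tV t -> f x \in tV t by move=> xV; rewrite -fV imset_f.
have g_inj : injective g.
  move=> x y; rewrite /g; case: ifP => xV; case: ifP => yV //; first exact: finj.
    by move=> fxy; move: yV; rewrite -fxy fVx.
  by move=> fxy; move: xV; rewrite fxy fVx.
exists (perm g_inj); split.
- by apply: triplet_iso_eq_in fiso => // x xV; rewrite permE gf.
- by move=> x xP; rewrite permE gf ?fP ?(subsetP PV).
- by move=> x xQ; rewrite permE gf ?fQ ?(subsetP QV).
- move=> x xP xQ; rewrite permE /g; case: ifP => // xV.
  by apply: fout; rewrite !inE negb_or xP xQ xV.
Qed.

Lemma sat_delete_swaps t s P Q p : wf_assign t -> label_free t P -> swaps t s P Q ->
  sat (delete t P) p <-> sat (delete t Q) p.
Proof.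
move=> wf tP sw; have [[sV _ sE sl sc] _ _ _] := sw.
suff iso : triplet_iso (delete t P) (delete t Q) s.
  exact: satn_iso (wf_assign_delete wf tP) iso.
split=> //=.
- by rewrite perm_imsetD sV (swaps_imset sw).
- by move=> x y _ _ /perm_inj.
- by move=> x y; rewrite !inE => /andP[_ xV] /andP[_ yV]; apply: sE.
- move=> i; case ci: (tc t i) => [S|] //=; move: (sc i); rewrite ci => -[sS].
  by rewrite perm_imsetD sS (swaps_imset sw).
Qed.

Lemma swaps_conj t g h R P Q : involutive g -> [disjoint Q & R] -> [disjoint Q & P] ->
  swaps t g R P -> swaps t h R Q -> swaps t (g * h * g) P Q.
Proof.
move=> gK QR QP [ag gR gP gout] [ah hR hQ hout].
have gQ x : x \in Q -> g x = x.
  by move=> xQ; rewrite gout ?(disjointFr QR xQ) ?(disjointFr QP xQ).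
split=> [|x xP|x xQ|x xP xQ]; rewrite ?permM.
- exact: autM (autM ag ah) ag.
- by rewrite gQ ?hR ?gP.
- by rewrite (gQ x) // gR ?hQ.
- have [xR|xR] := boolP (x \in R); last by rewrite gout // hout // gout.
  have gxP := gR x xR.
  have gxR : g x \notin R by apply: contra xP => /gR; rewrite gK.
  by rewrite hout ?gK ?(disjointFl QP gxP).
Qed.

(* The witness applies g, f^-1, g^-1, f, g in turn: on P, g parks points in R,
   out of reach of f^-1; on Q, g^-1 parks f^-1 x in R, out of reach of f. *)
Lemma swaps_mix_aut t f g P Q R :
  [disjoint P & Q] -> [disjoint P & R] -> [disjoint Q & R] ->
  swaps t f P Q -> swaps t g P R ->
  exists2 a, aut t a & {in P, a =1 f} /\ {in Q, a =1 f^-1}.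
Proof.
move=> PQ PR QR sf sg.
have [af fP _ fout] := sf; have [af' _ f'Q f'out] := swaps_inv sf.
have [ag gP _ gout] := sg; have [ag' g'P _ _] := swaps_inv sg.
exists (g * f^-1 * g^-1 * f * g); first exact: autM (autM (autM (autM ag af') ag') af) ag.
split=> [x xP|x xQ]; rewrite !permM.
  have gxR := gP x xP; have fxQ := fP x xP.
  rewrite f'out ?(disjointFl PR gxR) ?(disjointFl QR gxR) // permK.
  by rewrite gout ?(disjointFl PQ fxQ) ?(disjointFr QR fxQ).
have g'f'xR := g'P _ (f'Q x xQ).
rewrite (gout x) ?(disjointFl PQ xQ) ?(disjointFr QR xQ) //.
by rewrite fout ?(disjointFl PR g'f'xR) ?(disjointFl QR g'f'xR) // permKV.
Qed.

Lemma swaps_involution t f g P Q R : wf_assign t ->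
  [disjoint P & Q] -> [disjoint P & R] -> [disjoint Q & R] ->
  swaps t f P Q -> swaps t g P R -> exists2 h : {perm T}, involutive h & swaps t h P Q.
Proof.
move=> wf PQ PR QR sf sg; have [a aa [aP aQ]] := swaps_mix_aut PQ PR QR sf sg.
have [af fP fQ fout] := sf; have [af' _ f'Q f'out] := swaps_inv sf.
pose h0 x := if x \in P then f x else if x \in Q then f^-1 x else x.
have h0K : involutive h0.
  move=> x; rewrite {2}/h0; have [xP|xP] := boolP (x \in P).
    by rewrite /h0 (disjointFl PQ (fP x xP)) fP ?permK.
  have [xQ|xQ] := boolP (x \in Q); first by rewrite /h0 f'Q ?permKV.
  by rewrite /h0 (negbTE xP) (negbTE xQ).
pose h := perm (can_inj h0K).
have hP x : x \in P -> h x = f x by rewrite permE /h0 => ->.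
have hQ x : x \in Q -> h x = f^-1 x by move=> xQ; rewrite permE /h0 (disjointFl PQ xQ) xQ.
have hout x : x \notin P -> x \notin Q -> h x = x by rewrite permE /h0 => /negbTE-> /negbTE->.
have hf z : z \notin Q -> h z = f z.
  by move=> zQ; have [/hP //|zP] := boolP (z \in P); rewrite hout ?fout.
have hf' z : z \notin P -> h z = f^-1 z.
  by move=> zP; have [/hQ //|zQ] := boolP (z \in Q); rewrite hout ?f'out.
exists h; first by move=> x; rewrite !permE h0K.
split=> [|x /[dup] /hP-> /fP //|x /[dup] /hQ-> /f'Q //|]; last exact: hout.
apply: aut_pairwise => // x y _ _.
have [/andP[xQ yQ]|] := boolP ((x \notin Q) && (y \notin Q)).
  by exists f; rewrite ?hf.
have [/andP[xP yP]|] := boolP ((x \notin P) && (y \notin P)).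
  by exists f^-1; rewrite ?hf'.
rewrite !negb_and !negbK => PxPy QxQy; exists a => //.
have ha z : (z \in P) || (z \in Q) -> a z = h z.
  by case/orP=> [zP|zQ]; [rewrite aP ?hP | rewrite aQ ?hQ].
case/orP: PxPy => [zP|zP]; case/orP: QxQy => [zQ|zQ];
  rewrite ?(disjointFr PQ zP) // in zQ; by split; apply: ha; rewrite ?zP ?zQ ?orbT.
Qed.

End Automorphisms.

Section Family.
Variables (T I : finType) (C : I -> {set T}) (k : nat).
Implicit Types (t : triplet T) (J K : {set I}) (A S : {set T}) (g : I -> {perm T}).

Record family t J : Prop := Family {
  family_wf : wf_assign t;
  family_sub : {in J, forall i, C i \subset tV t};
  family_card : {in J, forall i, #|C i| <= k};
  family_disjoint : {in J &, forall i j, i != j -> [disjoint C i & C j]};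
  family_swappable : {in J &, forall i j, i != j -> swappable t (C i) (C j)};
  family_label_free : {in J, forall i, label_free t (C i)} }.

Lemma family_subset t J K : family t J -> K \subset J -> family t K.
Proof.
case=> wf sub card disj sw lf /subsetP KJ.
by split=> // [i /KJ|i /KJ|i j /KJ iJ /KJ|i j /KJ iJ /KJ|i /KJ]; auto.
Qed.

Lemma family_delete_sat t J i j p : family t J -> i \in J -> j \in J ->
  sat (delete t (C i)) p <-> sat (delete t (C j)) p.
Proof.
move=> fam iJ jJ; have [-> // | ij] := eqVneq i j.
have [s sw] := family_swappable fam iJ jJ ij.
exact: sat_delete_swaps (family_wf fam) (family_label_free fam iJ) sw.
Qed.

Lemma family_label t J x v : family t J -> v \in tV t -> {in J, forall j, v \notin C j} ->
  family (set_label t x v) J.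
Proof.
case=> wf sub card disj sw lf vV vJ; split=> //.
- exact: wf_assign_label.
- move=> i j iJ jJ ij; have [s ss] := sw i j iJ jJ ij.
  by exists s; apply: swaps_label ss (vJ i iJ) (vJ j jJ).
- move=> i iJ y w /=; case: eqP => [_ [<-] | _]; [exact: vJ | exact: lf].
Qed.

Lemma family_card_avoid t J v : family t J ->
  #|J| <= #|[set j in J | v \notin C j]|.+1.
Proof.
move=> fam; have -> : [set j in J | v \notin C j] = J :\: [set j | v \in C j].
  by apply/setP=> j; rewrite !inE andbC.
rewrite -{1}(cardsID [set j | v \in C j] J) addnC -addn1 leq_add2l.
apply/card_le1_eqP => i j; rewrite !inE => /andP[iJ vi] /andP[jJ vj].
apply/eqP; apply: contraT => ji.
by rewrite (disjointFr (family_disjoint fam jJ iJ ji) vj) in vi.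
Qed.

Definition base_swaps t J r g :=
  {in J, forall j, involutive (g j) /\ swaps t (g j) (C r) (C j)}.

Lemma family_involutions t J r : family t J -> r \in J -> 2 < #|J| ->
  exists g, base_swaps t J r g.
Proof.
move=> fam rJ J_gt2.
suff /fin_all_exists[g gJ] : forall j, exists h : {perm T},
    j \in J -> involutive h /\ swaps t h (C r) (C j) by exists g.
move=> j; have [jJ|] := boolP (j \in J); last by exists 1%g.
have [->|jr] := eqVneq j r.
  exists 1%g => _; split=> [x|]; rewrite ?perm1 //.
  by split=> [|x|x|x _ _]; rewrite ?perm1 //; apply: aut1.
have [l lJ] : exists2 l, l \in J & l \notin [set r; j].
  apply/exists_inP; apply: contraLR J_gt2; rewrite negb_exists_in -leqNgt.
  move=> /forall_inP Jrj; have : J \subset [set r; j] by apply/subsetP=> l /Jrj; rewrite negbK.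
  by move/subset_leq_card/leq_trans; apply; rewrite cards2 ltnS leq_b1.
rewrite !inE negb_or eq_sym [l == j]eq_sym => /andP[rl jl].
have rj : r != j by rewrite eq_sym.
have dis := family_disjoint fam; have sw := family_swappable fam.
have [f sf] := sw r j rJ jJ rj; have [g sg] := sw r l rJ lJ rl.
have [h hK sh] := swaps_involution (family_wf fam)
  (dis r j rJ jJ rj) (dis r l rJ lJ rl) (dis j l jJ lJ jl) sf sg.
by exists h.
Qed.

Definition trace g A j := g j @: (A :&: C j).

Definition trace_class J g A S := [set j in J | trace g A j == S].

Lemma trace_class_sub J g A S : trace_class J g A S \subset J.
Proof. by rewrite /trace_class setIdE subsetIl. Qed.

Lemma trace_swappable t J r g X A i j : family t J -> r \in J -> base_swaps t J r g ->
  i \in J -> j \in J -> i != j -> trace g A i = trace g A j ->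
  swappable (set_color t X A) (C i) (C j).
Proof.
move=> fam rJ gJ; wlog jr : i j / j != r.
  move=> wlog_jr iJ jJ ij trij; have [jr|jr] := eqVneq j r.
    have ir : i != r by rewrite -jr.
    have ji : j != i by rewrite eq_sym.
    exact: swappable_sym (wlog_jr j i ir jJ iJ ji (esym trij)).
  exact: wlog_jr jr iJ jJ ij trij.
move=> iJ jJ ij trij; have dis := family_disjoint fam.
have [giK sgi] := gJ i iJ; have [gjK sgj] := gJ j jJ.
have ji : j != i by rewrite eq_sym.
have sw := swaps_conj giK (dis j r jJ rJ jr) (dis j i jJ iJ ji) sgi sgj.
have [_ _ _ sw_out] := sw; exists (g i * g j * g i)%g; apply: swaps_color sw _.
have giCj x : x \in C j -> g i x = x.
  have [_ _ _ gi_out] := sgi; move=> xj.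
  by rewrite gi_out ?(disjointFr (dis j r jJ rJ jr) xj) ?(disjointFr (dis j i jJ iJ ji) xj).
apply: perm_imset_eq => x xA.
have [xi|xi] := boolP (x \in C i).
  have : g i x \in trace g A j by rewrite -trij imset_f // inE xA xi.
  by case/imsetP=> y; rewrite inE => /andP[yA yj]; rewrite !permM => ->; rewrite gjK giCj.
have [xj|xj] := boolP (x \in C j); last by rewrite sw_out.
have : g j x \in trace g A i by rewrite trij imset_f // inE xA xj.
by case/imsetP=> y; rewrite inE => /andP[yA yi]; rewrite !permM (giCj x xj) => ->; rewrite giK.
Qed.

Lemma family_trace_class t J r g X A S : family t J -> r \in J -> base_swaps t J r g ->
  A \subset tV t -> family (set_color t X A) (trace_class J g A S).
Proof.
move=> fam rJ gJ AV; have KJ := trace_class_sub J g A S.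
have [wf sub card disj _ lf] := family_subset fam KJ.
split=> //; first exact: wf_assign_color.
move=> i j iK jK ij; have /subsetP sKJ := KJ.
apply: trace_swappable fam rJ gJ (sKJ i iK) (sKJ j jK) ij _.
by move: iK jK; rewrite !inE => /andP[_ /eqP->] /andP[_ /eqP->].
Qed.

Lemma trace_class_large t J r g A m : family t J -> r \in J -> base_swaps t J r g ->
  2 ^ k * m < #|J| -> exists2 S : {set T}, S \subset C r & m < #|trace_class J g A S|.
Proof.
move=> fam rJ gJ J_gt.
have trJ : {in J, forall j, trace g A j \in powerset (C r)}.
  move=> j jJ; have [_ [_ _ gj _]] := gJ j jJ; rewrite powersetE.
  by apply/subsetP=> x /imsetP[y]; rewrite inE => /andP[_ /gj gy] ->.
have ltJ : #|powerset (C r)| * m < #|J|.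
  rewrite card_powerset; apply: leq_ltn_trans J_gt.
  by rewrite leq_mul2r leq_exp2l ?(family_card fam) ?orbT.
by have [S] := pigeonhole_fiber trJ ltJ; rewrite powersetE; exists S.
Qed.

Lemma trace_setU_base t J r g A S j : family t J -> r \in J -> base_swaps t J r g ->
  [disjoint A & C r] -> S \subset C r -> j \in J ->
  trace g (A :|: g r @: S) j = if j == r then S else trace g A j.
Proof.
move=> fam rJ gJ Ar SC jJ; have [grK [_ grC _ _]] := gJ r rJ.
have grS : g r @: S \subset C r.
  by apply/subsetP=> _ /imsetP[x /(subsetP SC) xC ->]; apply: grC.
rewrite /trace setIUl; case: eqP => [->|/eqP jr].
  rewrite (disjoint_setI0 Ar) set0U (setIidPl grS).
  by rewrite -imset_comp (eq_imset _ grK) imset_id.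
by rewrite (disjoint_setI0 (disjointWl grS (family_disjoint fam rJ jJ _))) ?setU0 // eq_sym.
Qed.

Definition deletion_stable phi := forall t J i, family t J -> i \in J ->
  2 ^ (k * countS phi) * countV phi < #|J| -> sat t phi <-> sat (delete t (C i)) phi.

Lemma deletion_stable_vfree phi : countV phi = 0 -> deletion_stable phi.
Proof. by move=> cV t J i fam iJ _; apply: sat_delete_vfree (family_label_free fam iJ). Qed.

Lemma deletion_stable_Not q : deletion_stable q -> deletion_stable (Not q).
Proof. by move=> IH t J i fam iJ J_gt; have E := IH t J i fam iJ J_gt; split=> nq /E. Qed.

Lemma deletion_stable_ExV x q : deletion_stable (substV x q) -> deletion_stable (ExV x q).
Proof.
rewrite /deletion_stable countS_substV countV_substV => IH t J r fam rJ.
rewrite /= mulnS; set P := 2 ^ _ => J_gt.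
pose Jv v := [set j in J | v \notin C j].
have JvJ v : Jv v \subset J by rewrite /Jv setIdE subsetIl.
have IHv v j : v \in tV t -> j \in Jv v ->
    sat (set_label t x v) (substV x q) <-> sat (delete (set_label t x v) (C j)) (substV x q).
  move=> vV jv; apply: IH jv _.
    apply: family_label (family_subset fam (JvJ v)) vV _.
    by move=> i; rewrite inE => /andP[].
  have := family_card_avoid v fam; have : 0 < P by rewrite expn_gt0.
  rewrite /Jv -/P; lia.
split=> [/sat_ExV[xN [v vV Hv]] | /sat_ExV[xN [v]]].
- have [j jv] : exists j, j \in Jv v.
    apply/set0Pn; rewrite -card_gt0; have := family_card_avoid v fam.
    by rewrite -/(Jv v); lia.
  have jJ := subsetP (JvJ v) j jv.
  apply/(family_delete_sat _ fam rJ jJ)/sat_ExV; split=> //.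
  exists v; first by move: jv; rewrite !inE vV andbT => /andP[].
  exact/(IHv v j vV jv).
- rewrite inE => /andP[vr vV] Hv; apply/sat_ExV; split=> //; exists v => //.
  by apply/(IHv v r vV); rewrite // inE vr rJ.
Qed.

Lemma deletion_stable_ExS X q : 0 < k -> 0 < countV q ->
  deletion_stable (substS X q) -> deletion_stable (ExS X q).
Proof.
move=> k_gt0 cV; rewrite /deletion_stable countS_substS countV_substS => IH t J r fam rJ.
rewrite /= mulnS expnD -mulnA; set M := _ * countV q => J_gt.
have J_gt2 : 2 < #|J|.
  apply: leq_ltn_trans J_gt; rewrite -(muln1 2) leq_mul ?muln_gt0 ?expn_gt0 //.
  by rewrite -{1}(expn1 2) leq_exp2l.
have [g gJ] := family_involutions fam rJ J_gt2.
have IHcls A S j : A \subset tV t -> j \in trace_class J g A S -> M < #|trace_class J g A S| ->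
    sat (set_color t X A) (substS X q) <-> sat (delete (set_color t X A) (C j)) (substS X q).
  by move=> AV jS; apply: IH jS; apply: family_trace_class fam rJ gJ AV.
split=> [/sat_ExS[XN [A AV HA]] | /sat_ExS[XN [A]]].
- have [S _ MS] := trace_class_large A fam rJ gJ J_gt.
  have [j jS] : exists j, j \in trace_class J g A S.
    by apply/set0Pn; rewrite -card_gt0; apply: leq_ltn_trans MS.
  have jJ := subsetP (trace_class_sub J g A S) j jS.
  apply/(family_delete_sat _ fam rJ jJ)/sat_ExS; split; first by rewrite /= XN.
  exists (A :\: C j); first exact: setSD.
  by rewrite -delete_color; apply/(IHcls A S j AV jS MS).
- rewrite subsetD => /andP[AV Ar] HA; have [S SC MS] := trace_class_large A fam rJ gJ J_gt.
  have [_ [_ grC _ _]] := gJ r rJ.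
  have grS : g r @: S \subset C r.
    by apply/subsetP=> _ /imsetP[x /(subsetP SC) xC ->]; apply: grC.
  (* Adding g r @: S inside C r puts r into the trace class of S. *)
  pose A' := A :|: g r @: S.
  have A'V : A' \subset tV t by rewrite subUset AV (subset_trans grS (family_sub fam rJ)).
  have trA' := trace_setU_base fam rJ gJ Ar SC.
  have clsA' : trace_class J g A S \subset trace_class J g A' S.
    apply/subsetP=> j; rewrite !inE => /andP[jJ trj].
    by rewrite jJ trA' //; case: (j == r); rewrite ?eqxx.
  have rA' : r \in trace_class J g A' S by rewrite inE rJ trA' // !eqxx.
  apply/sat_ExS; split; first by move: XN => /=; case: (tc t X).
  exists A' => //; apply/(IHcls A' S r A'V rA' (leq_trans MS (subset_leq_card clsA'))).
  rewrite delete_color setDUl (setDidPl Ar).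
  by move: grS; rewrite -setD_eq0 => /eqP->; rewrite setU0.
Qed.

Lemma deletion_stable_prenex phi : 0 < k -> prenex phi -> deletion_stable phi.
Proof.
move=> k_gt0; move: (leqnn (msize phi)); move: {2}(msize phi) => n.
elim: n phi => [|n IH] phi; first by case: phi.
move=> size_phi pphi; have [cV0|cV] := posnP (countV phi).
  exact: deletion_stable_vfree.
have nqf : ~~ qfree phi by apply: contraTN cV => /qfree_countV ->.
case: phi size_phi pphi cV nqf => //= [x q|X q|q r|q] size_q pq cV nqf.
- by apply: deletion_stable_ExV; apply: IH; rewrite ?msize_substV ?prenex_substV.
- by apply: deletion_stable_ExS => //; apply: IH; rewrite ?msize_substS ?prenex_substS.
- by rewrite pq in nqf.
- by apply: deletion_stable_Not; apply: IH.
Qed.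

End Family.

Theorem lemma14 (T : finType) (t : triplet T) (k q1 q2 : nat)
  (C : nat -> {set T}) (phi : mso) :
  wf_triplet t ->
  wf_triplet (delete t (C 0)) ->
  (forall i, i < 2 ^ (k * q2) * q1 + 1 -> C i \subset tV t) ->
  (forall i, i < 2 ^ (k * q2) * q1 + 1 -> #|C i| <= k) ->
  (forall i j, i < 2 ^ (k * q2) * q1 + 1 -> j < 2 ^ (k * q2) * q1 + 1 ->
     i != j -> [disjoint C i & C j]) ->
  (forall i j, i < 2 ^ (k * q2) * q1 + 1 -> j < 2 ^ (k * q2) * q1 + 1 ->
     i != j -> same_type t (C i) (C j)) ->
  prenex phi -> countV phi = q1 -> countS phi = q2 ->
  (sat t phi <-> sat (delete t (C 0)) phi).
Proof.
move=> [_ [_ wf]] [_ [_ [lC0 _]]] Csub Ccard Cdis Cst pphi cV cS.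
set N := 2 ^ (k * q2) * q1 + 1 in Csub Ccard Cdis Cst.
have N_gt0 : 0 < N by rewrite /N addn1.
have [k0|k_gt0] := posnP k.
  by have := Ccard 0 N_gt0; rewrite k0 leqn0 => /eqP/cards0_eq->; rewrite delete_set0.
have lf0 : label_free t (C 0) by move=> i v /lC0; rewrite inE => /andP[].
have sw (i j : 'I_N) : i != j -> swappable t (C i) (C j).
  by move=> ij; apply: same_type_swappable; rewrite ?Csub //; apply: Cst.
have fam : family (fun i : 'I_N => C i) k t [set: 'I_N].
  split=> // [i _|i _|i j _ _|i j _ _|i _]; rewrite ?Csub ?Ccard //.
  - exact: Cdis (ltn_ord i) (ltn_ord j).
  - exact: sw.
  - have [-> //|i0] := eqVneq i (Ordinal N_gt0).
    by have [s /swaps_label_free] := sw i (Ordinal N_gt0) i0; apply.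
apply: (deletion_stable_prenex k_gt0 pphi fam (in_setT (Ordinal N_gt0))).
by rewrite cardsT card_ord cV cS /N addn1 ltnSn.
Qed.
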